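(* Let $d\ge 2$ and $r,t$ be positive integers, let $\mathcal{S}$ be a finite collection of spheres in $\mathbb{R}^d$, and let $\mathcal{N}\subseteq\mathcal{S}$ be a nested set of exactly $t(r+1)$ spheres. Suppose that the intersection graph $G(\mathcal{S}\setminus\mathcal{N})$ contains a collection $\mathcal{P}$ of $t^2(r+1)$ pairwise vertex-disjoint paths such that for each $P\in\mathcal{P}$: one end vertex of $P$ intersects the minimal sphere of $\mathcal{N}$, the other end vertex of $P$ intersects the maximal sphere of $\mathcal{N}$, and $P$ has length (number of edges) at most $r$. Then $G(\mathcal{S})$ contains $K_{t,t}$ as a subgraph.
   Context: A sphere in $\mathbb{R}^d$ is the boundary of a closed ball of positive radius; for a sphere $S$, $B(S)$ is the closed ball with boundary $S$. For a collection $\mathcal{X}$ of spheres, $G(\mathcal{X})$ is the graph with vertex set $\mathcal{X}$ in which two spheres are adjacent iff they intersect. A sphere $S'$ contains a different sphere $S$ if $B(S)\subseteq B(S')$. A collection is nested if for any two of its spheres one contains the other. Within a nested collection, the minimal (resp. maximal) sphere is the one containing no other (resp. contained in no other) sphere of the collection. Subgraphs need not be induced. *)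

From HB Require Import structures.
From mathcomp Require Import all_boot all_order all_algebra.
From mathcomp Require Import reals.
Set Implicit Arguments. Unset Strict Implicit. Unset Printing Implicit Defensive.
Import Order.TTheory GRing.Theory Num.Theory.
Local Open Scope ring_scope.

(* Spheres in R^d (R : realType), given by center and radius;
   the radius is required positive by a separate predicate. *)
Record sphere (R : realType) (d : nat) := Sphere { center : 'rV[R]_d; radius : R }.

Definition sqdist (R : realType) (d : nat) (x c : 'rV[R]_d) : R :=
  \sum_(i < d) (x 0 i - c 0 i) ^+ 2.

Definition is_sphere (R : realType) (d : nat) (S : sphere R d) : Prop := 0 < radius S.

Definition on_sphere (R : realType) (d : nat) (S : sphere R d) (x : 'rV[R]_d) : Prop :=
  sqdist x (center S) = radius S ^+ 2.

Definition in_ball (R : realType) (d : nat) (S : sphere R d) (x : 'rV[R]_d) : Prop :=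
  sqdist x (center S) <= radius S ^+ 2.

Definition intersect (R : realType) (d : nat) (S1 S2 : sphere R d) : Prop :=
  exists x, on_sphere S1 x /\ on_sphere S2 x.

Definition contains (R : realType) (d : nat) (S' S : sphere R d) : Prop :=
  forall x, in_ball S x -> in_ball S' x.

(* A collection of spheres is indexed by a finite type I via an injective s. *)
Definition nested (R : realType) (d : nat) (I : finType) (s : I -> sphere R d)
  (N : {set I}) : Prop :=
  forall i j, i \in N -> j \in N -> i != j -> contains (s i) (s j) \/ contains (s j) (s i).

Definition minimal_in (R : realType) (d : nat) (I : finType) (s : I -> sphere R d)
  (N : {set I}) (m : I) : Prop :=
  m \in N /\ forall j, j \in N -> j != m -> ~ contains (s m) (s j).

Definition maximal_in (R : realType) (d : nat) (I : finType) (s : I -> sphere R d)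
  (N : {set I}) (M : I) : Prop :=
  M \in N /\ forall j, j \in N -> j != M -> ~ contains (s j) (s M).

Fixpoint adj_chain (R : realType) (d : nat) (I : finType) (s : I -> sphere R d)
  (x : I) (p : seq I) : Prop :=
  match p with
  | [::] => True
  | y :: q => x != y /\ intersect (s x) (s y) /\ adj_chain s y q
  end.

Definition is_path_avoiding (R : realType) (d : nat) (I : finType) (s : I -> sphere R d)
  (N : {set I}) (x : I) (p : seq I) : Prop :=
  uniq (x :: p) /\ all (fun v => v \notin N) (x :: p) /\ adj_chain s x p.

Definition contains_Ktt (R : realType) (d : nat) (I : finType) (s : I -> sphere R d)
  (t : nat) : Prop :=
  exists A B : {set I}, [/\ #|A| = t, #|B| = t, [disjoint A & B] &
    forall a b, a \in A -> b \in B -> intersect (s a) (s b)].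

From HB Require Import structures.
From mathcomp Require Import all_boot all_order all_algebra.
From mathcomp Require Import reals boolp.
From mathcomp Require Import ring lra zify.
Import Order.TTheory GRing.Theory Num.Theory.
Local Open Scope ring_scope.

Set Implicit Arguments. Unset Strict Implicit. Unset Printing Implicit Defensive.

(* The spheres of a nested family are ordered by radius.  A path of G(S \ N)
   from the minimal to the maximal sphere meets every sphere T of N: along the
   path one passes from spheres meeting the ball B(T) to spheres meeting the
   outside of its interior, and a sphere doing both meets T (here d >= 2 is
   used).  Hence every path has a vertex meeting at least t of the t(r+1)
   spheres of N, and the spheres it meets form an interval in the radius
   order.  By pigeonhole, t of these t^2(r+1) intervals have the same lowest
   sphere; they are then ordered by inclusion, and t spheres of the smallest
   one, together with the t vertices, span a K_{t,t}. *)

Lemma exists_small_quadratic {R : realFieldType} (a b q : R) :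
  a < 0 -> exists2 e, 0 < e & a + e * b + e ^+ 2 * q < 0.
Proof.
move=> a0; pose D := - a + `|b| + `|q|.
have D0 : 0 < D by rewrite /D -addrA ltr_pwDl ?oppr_gt0 // addr_ge0.
have [e e0 eD] : exists2 e, 0 < e & e * D = - a.
  by exists (- a / D); rewrite ?divr_gt0 ?oppr_gt0 ?divfK ?gt_eqF.
have e1 : e <= 1 by rewrite -(ler_pM2r D0) mul1r eD /D -addrA lerDl addr_ge0.
have eb : e * b <= e * `|b| by rewrite ler_pM2l // ler_norm.
have eq2 : e ^+ 2 * q <= e * `|q|.
  apply: (le_trans (y := e ^+ 2 * `|q|)); first by rewrite ler_pM2l ?exprn_gt0 ?ler_norm.
  by rewrite ler_wpM2r // expr2 ler_piMr // ltW.
have ea : e * a < 0 by rewrite pmulr_rlt0.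
exists e => //; rewrite /D in eD; lra.
Qed.

Lemma pigeonhole_fiber (A B : finType) (f : A -> B) (X : {set A}) (Y : {set B}) n :
  {in X, forall x, f x \in Y} -> (#|Y| * n < #|X|)%N ->
  exists2 y, y \in Y & (n < #|[set x in X | f x == y]|)%N.
Proof.
move=> fXY ltYX; apply/exists_inP; apply: contraLR ltYX => /exists_inPn small.
rewrite -leqNgt -sum1_card (partition_big f (mem Y)) //= -sum_nat_const.
apply: leq_sum => y /small; rewrite -ltnNge ltnS; apply: leq_trans.
by rewrite sum1dep_card; apply: subset_leq_card; apply/subsetP => x; rewrite !inE.
Qed.

Lemma exists_subset_card (T : finType) (A : {set T}) n :
  (n <= #|A|)%N -> exists2 B : {set T}, B \subset A & #|B| = n.
Proof.
case/card_geqP => s [us <- sA]; exists [set x in s].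
  by apply/subsetP => x; rewrite inE => /sA.
by rewrite cardsE; apply/card_uniqP.
Qed.

Section Geometry.
Variables (R : realType) (d : nat).
Implicit Types (x y c u v w : 'rV[R]_d) (S T : sphere R d).

Definition rdot u v : R := \sum_i u 0 i * v 0 i.

Lemma sqdistE x c : sqdist x c = rdot (x - c) (x - c).
Proof. by apply: eq_bigr => i _; rewrite !mxE expr2. Qed.

Lemma rdotC u v : rdot u v = rdot v u.
Proof. by apply: eq_bigr => i _; rewrite mulrC. Qed.

Lemma rdotDl u v w : rdot (u + v) w = rdot u w + rdot v w.
Proof. by rewrite -big_split; apply: eq_bigr => i _; rewrite !mxE mulrDl. Qed.

Lemma rdotZl a u v : rdot (a *: u) v = a * rdot u v.
Proof. by rewrite mulr_sumr; apply: eq_bigr => i _; rewrite !mxE mulrA. Qed.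

Lemma rdotDr u v w : rdot u (v + w) = rdot u v + rdot u w.
Proof. by rewrite rdotC rdotDl !(rdotC u). Qed.

Lemma rdotZr a u v : rdot u (a *: v) = a * rdot u v.
Proof. by rewrite rdotC rdotZl rdotC. Qed.

Lemma rdotDD u v : rdot (u + v) (u + v) = rdot u u + 2 * rdot u v + rdot v v.
Proof. by rewrite rdotDl !rdotDr (rdotC v u); ring. Qed.

Lemma rdot_ge0 u : 0 <= rdot u u.
Proof. by apply: sumr_ge0 => i _; rewrite -expr2 sqr_ge0. Qed.

Lemma rdot_eq0 u : rdot u u = 0 -> u = 0.
Proof.
move=> /psumr_eq0P u0; apply/rowP => i; apply/eqP; rewrite mxE -sqrf_eq0 expr2.
by rewrite u0 // => j _; rewrite -expr2 sqr_ge0.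
Qed.

Lemma rdot_deltal (i : 'I_d) u : rdot (delta_mx 0 i) u = u 0 i.
Proof.
rewrite /rdot (bigD1 i) //= big1 => [|j /negbTE ji]; rewrite mxE ?ji ?eqxx /=.
  by rewrite mul1r addr0.
by rewrite mul0r.
Qed.

Lemma CauchySchwarz_rdot u v : rdot u v ^+ 2 <= rdot u u * rdot v v.
Proof.
set U := rdot u u; set W := rdot v v; set P := rdot u v.
have [/rdot_eq0 v0|W0] := eqVneq W 0.
  by rewrite /P v0 rdotC -(scale0r 0) rdotZl mul0r expr0n mulr_ge0 ?rdot_ge0.
have Wpos : 0 < W by rewrite lt_def W0 rdot_ge0.
have := rdot_ge0 (W *: u + (- P) *: v).
rewrite rdotDD !(rdotZl, rdotZr) -/U -/W -/P.
have -> : W * (W * U) + 2 * (W * (- P * P)) + - P * (- P * W) = W * (W * U - P ^+ 2).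
  by ring.
by rewrite pmulr_rge0 // subr_ge0 mulrC.
Qed.

Lemma exists_orthogonal w : (2 <= d)%N -> exists v, 0 < rdot v v /\ rdot v w = 0.
Proof.
move=> d2; pose i0 : 'I_d := Ordinal (ltnW d2); pose i1 : 'I_d := Ordinal d2.
pose e i : 'rV[R]_d := delta_mx 0 i.
have eE i j : e i 0 j = (i == j)%:R by rewrite mxE (eq_sym j).
have [w0|w0] := eqVneq (w 0 i0) 0.
  by exists (e i0); rewrite !rdot_deltal w0 eE eqxx ltr01.
exists (w 0 i1 *: e i0 + (- w 0 i0) *: e i1).
rewrite rdotDD !(rdotZl, rdotZr, rdotDl) !rdot_deltal !eE eqxx /=.
split; last by ring.
have := sqr_ge0 (w 0 i1); have : 0 < w 0 i0 ^+ 2 by rewrite exprn_even_gt0.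
nra.
Qed.

(* The witness is [c + a w + b v] with [v] orthogonal to [w]; when [w = 0] the
   junk value [tau / 0 = 0] gives [a = 0], as needed. *)
Lemma sphere_level_point c w rho tau : (2 <= d)%N -> tau ^+ 2 <= rho ^+ 2 * rdot w w ->
  exists z, sqdist z c = rho ^+ 2 /\ rdot (z - c) w = tau.
Proof.
move=> d2 hle; have [v [vpos vw]] := exists_orthogonal w d2.
set W := rdot w w in hle *; set V := rdot v v in vpos.
have W0 : 0 <= W := rdot_ge0 w.
pose a := tau / W.
have [aW aaW] : a * W = tau /\ a ^+ 2 * W <= rho ^+ 2.
  have [W_0|Wn0] := eqVneq W 0.
    rewrite W_0 mulr0 in hle.
    have tau0 : tau = 0 by apply/eqP; rewrite -sqrf_eq0 eq_le hle sqr_ge0.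
    by rewrite /a W_0 !mulr0 tau0 sqr_ge0.
  have Wpos : 0 < W by rewrite lt_def Wn0.
  have aWE : a * W = tau by rewrite /a mulfVK.
  by split => //; nra.
pose b := Num.sqrt ((rho ^+ 2 - a ^+ 2 * W) / V).
have bb : b ^+ 2 * V = rho ^+ 2 - a ^+ 2 * W.
  rewrite sqr_sqrtr ?divfK ?gt_eqF //.
  by rewrite divr_ge0 ?subr_ge0 // ltW.
exists (c + (a *: w + b *: v)); rewrite sqdistE (addrC c) addrK rdotDD.
rewrite !(rdotZl, rdotZr, rdotDl) vw (rdotC w v) vw -/W -/V.
by rewrite -aW; split; [rewrite -[rho ^+ 2](subrK (a ^+ 2 * W)) -bb |]; ring.
Qed.

(* The level [rdot (z - c) w] that puts a point [z] of [S] on [T] lies between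
   the levels of [x] and [y], hence is attained on [S]. *)
Lemma sphere_meet S T x y : (2 <= d)%N ->
  on_sphere S x -> on_sphere S y -> in_ball T x ->
  radius T ^+ 2 <= sqdist y (center T) -> intersect S T.
Proof.
rewrite /on_sphere /in_ball => d2 Sx Sy Tx Ty.
set c := center S in Sx Sy; set c' := center T in Tx Ty.
set w := c - c'; set W := rdot w w.
have sqdist_c' z : sqdist z c' = sqdist z c + 2 * rdot (z - c) w + W.
  by rewrite !sqdistE -rdotDD /w addrA subrK.
have CS z : sqdist z c = radius S ^+ 2 -> rdot (z - c) w ^+ 2 <= radius S ^+ 2 * W.
  by move=> <-; rewrite sqdistE; apply: CauchySchwarz_rdot.
pose tau := (radius T ^+ 2 - radius S ^+ 2 - W) / 2.
have := CS x Sx; have := CS y Sy; have := sqdist_c' x; have := sqdist_c' y.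
rewrite Sx Sy; set a := rdot (x - c) w; set b := rdot (y - c) w => ey ex hb ha.
have [z [Sz ez]] : exists z, sqdist z c = radius S ^+ 2 /\ rdot (z - c) w = tau.
  have /andP[atau taub] : a <= tau <= b by apply/andP; rewrite /tau; lra.
  apply: sphere_level_point => //; rewrite -/W; have [tau0|tau0] := lerP 0 tau; nra.
by exists z; split; rewrite /on_sphere // sqdist_c' Sz ez /tau; lra.
Qed.

(* Test points [c + r e] and [c - r e] of [B(S)], with [e] a unit vector. *)
Lemma contains_sqdist S T : (0 < d)%N -> contains T S ->
  sqdist (center S) (center T) + radius S ^+ 2 <= radius T ^+ 2.
Proof.
move=> d0 ST; pose e : 'rV[R]_d := delta_mx 0 (Ordinal d0).
set c := center S; set c' := center T.
have ee : rdot e e = 1 by rewrite rdot_deltal mxE !eqxx.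
have test k : k ^+ 2 = radius S ^+ 2 ->
    sqdist c c' + 2 * (k * rdot (c - c') e) + radius S ^+ 2 <= radius T ^+ 2.
  move=> kS; have /ST : in_ball S (c + k *: e).
    by rewrite /in_ball sqdistE (addrC c) addrK !(rdotZl, rdotZr) ee mulr1 -expr2 kS.
  by rewrite /in_ball sqdistE addrAC rdotDD -sqdistE !(rdotZl, rdotZr) ee mulr1 -expr2 kS.
have := test _ (erefl (radius S ^+ 2)); have := test (- radius S) (sqrrN _); lra.
Qed.

(* Pushing [y] slightly away from [center T] leaves [B(T)], but would stay in
   [B(S)] if [y] were in the interior of [B(S)]. *)
Lemma contains_boundary S T y : 0 < radius T -> contains T S -> on_sphere T y ->
  radius S ^+ 2 <= sqdist y (center S).
Proof.
move=> T0 ST Ty; rewrite leNgt; apply/negP => yS.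
set u := y - center S; set w := y - center T.
have yS' : sqdist y (center S) - radius S ^+ 2 < 0 by rewrite subr_lt0.
have [e e0 small] := exists_small_quadratic (2 * rdot u w) (rdot w w) yS'.
have /ST : in_ball S (y + e *: w).
  rewrite /in_ball sqdistE addrAC rdotDD -/u -sqdistE !(rdotZl, rdotZr); lra.
rewrite /in_ball sqdistE.
have -> : y + e *: w - center T = (1 + e) *: w by rewrite addrAC scalerDl scale1r.
rewrite !(rdotZl, rdotZr) -sqdistE Ty.
have := exprn_gt0 2 T0; nra.
Qed.

Lemma contains_radius_lt S T : (0 < d)%N -> 0 < radius S -> 0 < radius T ->
  S <> T -> contains T S -> radius S < radius T.
Proof.
move=> d0 S0 T0 neST /(contains_sqdist d0); rewrite sqdistE => h.
have hd := rdot_ge0 (center S - center T).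
rewrite lt_def; apply/andP; split; last by nra.
apply/eqP => eST; apply: neST; rewrite eST in h.
have /rdot_eq0/eqP : rdot (center S - center T) (center S - center T) = 0.
  by apply/eqP; rewrite eq_le hd andbT; lra.
by rewrite subr_eq0; case: S T eST {S0 T0 h hd} => c r [c' r'] /= -> /eqP ->.
Qed.

End Geometry.

Definition meets_ball (R : realType) (d : nat) (T S : sphere R d) : Prop :=
  exists z, on_sphere S z /\ in_ball T z.

Definition meets_outside (R : realType) (d : nat) (T S : sphere R d) : Prop :=
  exists z, on_sphere S z /\ radius T ^+ 2 <= sqdist z (center T).

Lemma intersect_meets_same_side (R : realType) (d : nat) (T S S' : sphere R d) :
  intersect S S' ->
  (meets_ball T S /\ meets_ball T S') \/ (meets_outside T S /\ meets_outside T S').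
Proof.
move=> [z [Sz S'z]]; have [zT|zT] := lerP (sqdist z (center T)) (radius T ^+ 2).
  by left; split; exists z.
by right; split; exists z; split => //; apply: ltW.
Qed.

Section NestedFamily.
Variables (R : realType) (d : nat) (I : finType) (s : I -> sphere R d) (N : {set I}).
Hypotheses (d2 : (2 <= d)%N) (s_pos : forall i, is_sphere (s i)) (s_inj : injective s).
Hypothesis N_nested : nested s N.

Lemma nested_contains i j : i \in N -> j \in N ->
  radius (s i) <= radius (s j) -> contains (s j) (s i).
Proof.
move=> iN jN le_ij; have [-> //|ij] := eqVneq i j.
case: (N_nested iN jN ij) => // ji; move: le_ij; rewrite leNgt.
have ne_ji : s j <> s i by move/s_inj/eqP; rewrite eq_sym (negbTE ij).
by rewrite (contains_radius_lt (ltnW d2) (s_pos j) (s_pos i) ne_ji ji).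
Qed.

Lemma minimal_radius_le m j : minimal_in s N m -> j \in N -> radius (s m) <= radius (s j).
Proof.
case=> mN min_m jN; rewrite leNgt; apply/negP => lt_jm.
have jm : j != m by apply: contraTneq lt_jm => ->; rewrite ltxx.
exact: min_m jm (nested_contains jN mN (ltW lt_jm)).
Qed.

Lemma maximal_radius_ge M j : maximal_in s N M -> j \in N -> radius (s j) <= radius (s M).
Proof.
case=> MN max_M jN; rewrite leNgt; apply/negP => lt_Mj.
have jM : j != M by apply: contraTneq lt_Mj => ->; rewrite ltxx.
exact: max_M jM (nested_contains MN jN (ltW lt_Mj)).
Qed.

Lemma meets_ball_lower v a j : a \in N -> j \in N -> radius (s a) <= radius (s j) ->
  intersect (s v) (s a) -> meets_ball (s j) (s v).
Proof.
move=> aN jN le_aj [z [vz az]]; exists z; split => //.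
by apply: (nested_contains aN jN le_aj); rewrite /in_ball az.
Qed.

Lemma meets_outside_upper v b j : b \in N -> j \in N -> radius (s j) <= radius (s b) ->
  intersect (s v) (s b) -> meets_outside (s j) (s v).
Proof.
move=> bN jN le_jb [z [vz bz]]; exists z; split => //.
exact: contains_boundary (s_pos b) (nested_contains jN bN le_jb) bz.
Qed.

Lemma adj_chain_switch (A B : I -> Prop) x p :
  (forall u w, intersect (s u) (s w) -> B u \/ A w) ->
  A x -> B (last x p) -> adj_chain s x p -> exists2 v, v \in x :: p & A v /\ B v.
Proof.
move=> step; elim: p x => [|y p IHp] x /= Ax Blast.
  by exists x; rewrite ?mem_head.
case=> _ [/step [Bx|Ay] chain]; first by exists x; rewrite ?mem_head.
by have [v vp ABv] := IHp y Ay Blast chain; exists v; rewrite // in_cons vp orbT.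
Qed.

Lemma path_meets_nested m M x p : minimal_in s N m -> maximal_in s N M ->
  adj_chain s x p ->
  (intersect (s x) (s m) /\ intersect (s (last x p)) (s M)) \/
  (intersect (s x) (s M) /\ intersect (s (last x p)) (s m)) ->
  forall j, j \in N -> exists2 v, v \in x :: p & intersect (s v) (s j).
Proof.
move=> min_m max_M chain ends j jN; have mN := min_m.1; have MN := max_M.1.
pose lo v := meets_ball (s j) (s v); pose hi v := meets_outside (s j) (s v).
have m_lo v : intersect (s v) (s m) -> lo v.
  exact: meets_ball_lower mN jN (minimal_radius_le min_m jN).
have M_hi v : intersect (s v) (s M) -> hi v.
  exact: meets_outside_upper MN jN (maximal_radius_ge max_M jN).
have step u w : intersect (s u) (s w) -> (lo u /\ lo w) \/ (hi u /\ hi w).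
  exact: intersect_meets_same_side.
have [v vp [[zl [vzl zlj]] [zh [vzh zhj]]]] : exists2 v, v \in x :: p & lo v /\ hi v.
  case: ends => [[xm lM]|[xM lm]].
    by apply: (adj_chain_switch _ (m_lo _ xm) (M_hi _ lM) chain) => u w /step; tauto.
  have [|v vp [? ?]] := adj_chain_switch _ (M_hi _ xM) (m_lo _ lm) chain.
    by move=> u w /step; tauto.
  by exists v.
by exists v => //; apply: sphere_meet d2 vzl vzh zlj zhj.
Qed.

Definition meet_set v : {set I} := [set j in N | `[< intersect (s v) (s j) >]].

Lemma mem_meet_set v j : j \in meet_set v <-> j \in N /\ intersect (s v) (s j).
Proof. by rewrite inE; split => [/andP[-> /asboolP]|[-> /asboolP]]. Qed.

Lemma meet_set_subN v : meet_set v \subset N.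
Proof. by apply/subsetP => j /mem_meet_set[]. Qed.

Lemma meet_set_interval v a b j : a \in meet_set v -> b \in meet_set v -> j \in N ->
  radius (s a) <= radius (s j) <= radius (s b) -> j \in meet_set v.
Proof.
move=> /mem_meet_set[aN va] /mem_meet_set[bN vb] jN /andP[le_aj le_jb].
apply/mem_meet_set; split => //.
have [z [vz zj]] := meets_ball_lower aN jN le_aj va.
have [z' [vz' z'j]] := meets_outside_upper bN jN le_jb vb.
exact: sphere_meet d2 vz vz' zj z'j.
Qed.

Definition lowest (A : {set I}) a :=
  a \in A /\ forall j, j \in A -> radius (s a) <= radius (s j).

Lemma exists_lowest A : A != set0 -> exists a, lowest A a.
Proof.
by case/set0Pn => i iA; case: (arg_minP (fun j => radius (s j)) iA) => a; exists a.
Qed.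

(* Both sets are intervals of [N] starting at [a], so they are comparable. *)
Lemma meet_set_sub u v a : lowest (meet_set u) a -> lowest (meet_set v) a ->
  (#|meet_set u| <= #|meet_set v|)%N -> meet_set u \subset meet_set v.
Proof.
move=> [au low_u] [av low_v] le_uv; apply/subsetP => j ju.
have jN := subsetP (meet_set_subN u) j ju.
have [/exists_inP[b bv le_jb]|/exists_inPn above] :=
  boolP [exists b in meet_set v, radius (s j) <= radius (s b)].
  by apply: meet_set_interval av bv jN _; rewrite low_u.
have sub : meet_set v \subset meet_set u :\ j.
  apply/subsetP => b bv; have lt_bj : radius (s b) < radius (s j).
    by rewrite ltNge; apply: above.
  rewrite in_setD1 (contraTneq _ lt_bj) => [|->]; last by rewrite ltxx.
  have bN := subsetP (meet_set_subN v) b bv.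
  by apply: meet_set_interval au ju bN _; rewrite low_v // ltW.
by move: (subset_leq_card sub) le_uv; rewrite (cardsD1 j (meet_set u)) ju; lia.
Qed.

Lemma path_vertex_large_meet_set r t m M x p : (0 < t)%N -> #|N| = (t * r.+1)%N ->
  minimal_in s N m -> maximal_in s N M -> adj_chain s x p -> (size p <= r)%N ->
  (intersect (s x) (s m) /\ intersect (s (last x p)) (s M)) \/
  (intersect (s x) (s M) /\ intersect (s (last x p)) (s m)) ->
  exists2 v, v \in x :: p & (t <= #|meet_set v|)%N.
Proof.
move=> t0 cN min_m max_M chain size_p ends.
have /fin_all_exists[f hf] :
    forall j, exists v, j \in N -> v \in x :: p /\ intersect (s v) (s j).
  move=> j; have [jN|_] := boolP (j \in N); last by exists x.
  by have [v ? ?] := path_meets_nested min_m max_M chain ends jN; exists v.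
have fY : {in N, forall j, f j \in [set v in x :: p]}.
  by move=> j /hf[fj _]; rewrite inE.
have lt_N : (#|[set v in x :: p]| * t.-1 < #|N|)%N.
  rewrite cardsE; apply: leq_ltn_trans (leq_mul (card_size (x :: p)) (leqnn t.-1)) _.
  by rewrite cN /=; nia.
have [v vp big] := pigeonhole_fiber fY lt_N.
exists v; first by rewrite inE in vp.
rewrite -(prednK t0); apply: leq_trans big (subset_leq_card _).
apply/subsetP => j; rewrite inE => /andP[jN /eqP <-].
by apply/mem_meet_set; split => //; case: (hf j jN).
Qed.

Lemma Ktt_of_common_lowest t (V : {set I}) a : (0 < t)%N -> #|V| = t -> [disjoint V & N] ->
  (forall v, v \in V -> lowest (meet_set v) a /\ (t <= #|meet_set v|)%N) ->
  contains_Ktt s t.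
Proof.
move=> t0 cV VN hV.
have [v0 v0V] : exists v0, v0 \in V by apply/set0Pn; rewrite -card_gt0 cV.
case: (arg_minnP (fun v => #|meet_set v|) v0V) => u uV min_u.
have [B BJ cB] := exists_subset_card (hV u uV).2.
exists V, B; split => //.
  exact: disjointWr (subset_trans BJ (meet_set_subN u)) VN.
move=> v b vV bB; have sub := meet_set_sub (hV u uV).1 (hV v vV).1 (min_u v vV).
by case/mem_meet_set: (subsetP sub b (subsetP BJ b bB)).
Qed.

End NestedFamily.

Theorem lemma4p1 (R : realType) (d r t : nat) (I : finType) (s : I -> sphere R d)
  (N : {set I}) (m M : I)
  (P : 'I_(t ^ 2 * r.+1) -> I * seq I) :
  (2 <= d)%N -> (0 < r)%N -> (0 < t)%N ->
  (forall i, is_sphere (s i)) -> injective s ->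
  nested s N -> #|N| = (t * r.+1)%N ->
  minimal_in s N m -> maximal_in s N M ->
  (forall k, is_path_avoiding s N (P k).1 (P k).2) ->
  (forall k1 k2, k1 != k2 -> forall v, v \in (P k1).1 :: (P k1).2 ->
      v \notin (P k2).1 :: (P k2).2) ->
  (forall k, (size (P k).2 <= r)%N) ->
  (forall k,
     (intersect (s (P k).1) (s m) /\ intersect (s (last (P k).1 (P k).2)) (s M)) \/
     (intersect (s (P k).1) (s M) /\ intersect (s (last (P k).1 (P k).2)) (s m))) ->
  contains_Ktt s t.
Proof.
move=> d2 _ t0 s_pos s_inj N_nested cN min_m max_M paths disj size_P ends.
pose J := meet_set s N; pose path k := (P k).1 :: (P k).2.
have /fin_all_exists[f hf] : forall k, exists va : I * I,
    [/\ va.1 \in path k, (t <= #|J va.1|)%N & lowest s (J va.1) va.2].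
  move=> k; have [_ [_ chain]] := paths k.
  have [v vp large] := path_vertex_large_meet_set d2 s_pos s_inj N_nested t0 cN
    min_m max_M chain (size_P k) (ends k).
  have : J v != set0 by rewrite -card_gt0 (leq_trans t0).
  by case/(exists_lowest s) => a low_a; exists (v, a).
have fN : {in setT, forall k, (f k).2 \in N}.
  by move=> k _; have [_ _ [aJ _]] := hf k; apply: subsetP (meet_set_subN _ _ _) _ aJ.
have [|a aN big] := pigeonhole_fiber fN (n := t.-1).
  by rewrite cardsT card_ord cN; nia.
rewrite (prednK t0) in big; have [K KF cK] := exists_subset_card big.
have fKa k : k \in K -> (f k).2 = a by move/(subsetP KF); rewrite inE => /andP[_ /eqP].
apply: (Ktt_of_common_lowest d2 s_pos s_inj N_nested (a := a) t0
  (V := [set (f k).1 | k in K])).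
- rewrite card_in_imset // => k1 k2 _ _ f12; apply/eqP/negPn/negP => /disj /(_ (f k1).1).
  by case: (hf k1) (hf k2) => vk1 _ _ [vk2 _ _]; rewrite vk1 f12 vk2 => /(_ isT).
- rewrite disjoint_subset; apply/subsetP => _ /imsetP[k _ ->].
  by case: (paths k) (hf k) => _ [/allP avoid _] [/avoid vN _ _]; rewrite inE.
- by move=> _ /imsetP[k kK ->]; case: (hf k) => _ large; rewrite fKa.
Qed.
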